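(* Let $m \ge 1$ be an integer. Let $(h(n))_{n\ge 1}$ be the non-decreasing sequence of non-negative integers with $h(1)=0$ in which, for each integer $k\ge 0$, the value $k$ appears exactly $mk+1$ times. Let $(a(n))_{n\ge1}$ be the sequence of positive integers defined by $a(1)=1$ and the nested recurrence $$a(n+1) = n - a^{(m)}(n) + a^{(m+1)}(n) \qquad (n\ge 1).$$ Then $a(n) = n - h(n)$ for all $n \ge 1$, and this is the unique sequence satisfying the recurrence with $a(1)=1$.
   Context: For a function $f$ on the positive integers, the iterates are defined by $f^{(0)}(n)=n$ and $f^{(j+1)}(n)=f(f^{(j)}(n))$; thus $a^{(m)}(n)$ denotes $a$ applied $m$ times to $n$. Equivalently, $h(n)=k$ if and only if $T^{\star}_k \le n < T^{\star}_{k+1}$, where $T^{\star}_k = 1 + m\binom{k}{2} + k$ for $k\ge 0$. *)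

From mathcomp Require Import all_boot all_order all_algebra.
Set Implicit Arguments. Unset Strict Implicit. Unset Printing Implicit Defensive.

Definition Tstar (m k : nat) : nat := 1 + m * 'C(k, 2) + k.

Definition nested_solution (m : nat) (a : nat -> nat) : Prop :=
  a 1 = 1 /\
  (forall n, 1 <= n -> 1 <= a n) /\
  (forall n, 1 <= n ->
     ((a n.+1)%:Z = n%:Z - (iter m a n)%:Z + (iter m.+1 a n)%:Z)%R).

From mathcomp Require Import all_boot all_order all_algebra.
From mathcomp Require Import zify.
Set Implicit Arguments. Unset Strict Implicit. Unset Printing Implicit Defensive.

(* Uniqueness holds for any solution of the recurrence: by induction every
   solution satisfies 1 <= a n <= n, so a (n+1) only depends on earlier values.
   For existence put g n = n - h n.  The k-th block [T*_k, T*_(k+1)) has length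
   m k + 1 and g subtracts k on it, so g^m walks from a point of block k+1 down
   into block k.  This gives h (n+1) = h (g^m n) + 1, and since
   g^(m+1) n = g^m n - h (g^m n), that is exactly the recurrence for g. *)

Lemma iter_bounded (f : nat -> nat) n :
  (forall x, 1 <= x <= n -> 1 <= f x <= x) -> 1 <= n ->
  forall j, 1 <= iter j f n <= n.
Proof.
move=> f_bounded n_pos; elim=> [|j IHj] /=; first lia.
by have := f_bounded _ IHj; lia.
Qed.

Section NestedSolution.

Variables (m : nat) (a : nat -> nat).
Hypothesis a_sol : nested_solution m a.

Lemma nested_solution_le n : 1 <= n -> a n <= n.
Proof.
have [a1 [a_pos a_rec]] := a_sol.
elim/ltn_ind: n => -[|[|n]] IH // _; first by rewrite a1.
have a_bounded x : 1 <= x <= n.+1 -> 1 <= a x <= x.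
  by move=> /andP[x_pos x_le]; rewrite a_pos ?IH.
have /andP[b_pos b_le] := iter_bounded a_bounded isT m.
have := a_rec n.+1 isT; rewrite iterS.
by have := IH _ (leq_ltn_trans b_le (ltnSn _)) b_pos; lia.
Qed.

Lemma iter_nested_solution_bounded n : 1 <= n -> forall j, 1 <= iter j a n <= n.
Proof.
have [_ [a_pos _]] := a_sol.
by apply: iter_bounded => x /andP[x_pos _]; rewrite a_pos ?nested_solution_le.
Qed.

End NestedSolution.

Lemma nested_solution_unique m a b :
  nested_solution m a -> nested_solution m b -> forall n, 1 <= n -> a n = b n.
Proof.
move=> a_sol b_sol; have [a1 [_ a_rec]] := a_sol; have [b1 [_ b_rec]] := b_sol.
elim/ltn_ind=> -[|[|n]] IH // _; first by rewrite a1 b1.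
have iter_eq j : iter j a n.+1 = iter j b n.+1.
  elim: j => [|j IHj] //=.
  have := iter_nested_solution_bounded a_sol (isT : 0 < n.+1) j.
  by rewrite -IHj => bounds; rewrite IH //; lia.
suff: Posz (a n.+2) = Posz (b n.+2) by move=> /eqP; rewrite eqz_nat => /eqP.
by rewrite a_rec // b_rec // !iter_eq.
Qed.

Lemma TstarS m k : Tstar m k.+1 = Tstar m k + m * k + 1.
Proof. by rewrite /Tstar binS bin1; lia. Qed.

Lemma Tstar0 m : Tstar m 0 = 1.
Proof. by rewrite /Tstar bin0n muln0. Qed.

Lemma ltn_Tstar m k : k < Tstar m k.
Proof. by rewrite /Tstar; lia. Qed.

Section BlockSequence.

Variables (m : nat) (h : nat -> nat).
Hypothesis h_spec : forall n k, 1 <= n -> (h n = k <-> Tstar m k <= n < Tstar m k.+1).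

Local Notation g := (fun n => n - h n).

Lemma h_eq k n : Tstar m k <= n < Tstar m k.+1 -> h n = k.
Proof.
move=> n_in; apply/h_spec => //.
by have := ltn_Tstar m k; lia.
Qed.

Lemma h_block n : 1 <= n -> Tstar m (h n) <= n < Tstar m (h n).+1.
Proof. by move=> n_pos; apply/h_spec. Qed.

Lemma h1 : h 1 = 0.
Proof. by apply: h_eq; rewrite TstarS Tstar0 muln0. Qed.

Lemma g_bounded n : 1 <= n -> 1 <= g n <= n.
Proof. by move=> n_pos; have := h_block n_pos; have := ltn_Tstar m (h n); lia. Qed.

Lemma iter_g_block j k x :
  Tstar m k <= x -> x + j * k < Tstar m k.+1 -> iter j g (x + j * k) = x.
Proof.
move=> x_ge; elim: j => [|j IHj] x_lt; first by rewrite addn0.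
rewrite iterSr /= mulSn addnCA (h_eq (k := k)); last lia.
by rewrite addKn IHj //; lia.
Qed.

Lemma h_iter_g k n : Tstar m k.+1 <= n.+1 < Tstar m k.+2 -> h (iter m g n) = k.
Proof.
have Tk1 := TstarS m k; have Tk2 := TstarS m k.+1.
case: (ltnP n (Tstar m k.+1)) => [n_last n_in | n_ge n_in].
  have -> : n = Tstar m k + m * k by lia.
  rewrite iter_g_block //; last lia.
  by rewrite (h_eq (k := k)) //; lia.
pose r := n - Tstar m k.+1; pose q := r %/ k.+1; pose s := r %% k.+1.
have r_eq : r = q * k.+1 + s := divn_eq r k.+1.
have s_le : s <= k by rewrite -ltnS ltn_pmod.
have q_lt : q < m by rewrite ltn_divLR //; lia.
have [p m_eq] : exists p, m = p + q.+1 by exists (m - q.+1); rewrite subnK.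
have mk : m * k = p * k + q * k + k by rewrite m_eq mulnDl mulSn; lia.
have mk1 : m * k.+1 = m * k + p + q + 1 by rewrite mulnS m_eq; lia.
have n_eq : n = Tstar m k.+1 + s + q * k.+1 by move: r_eq; rewrite /r; lia.
have iter_q : iter q g n = Tstar m k.+1 + s.
  by rewrite n_eq iter_g_block ?leq_addr //; lia.
(* the (q+1)-st step leaves block k+1, the remaining p steps stay in block k *)
have g_exit : g (Tstar m k.+1 + s) = Tstar m k + q * k + s + p * k.
  by rewrite /= (h_eq (k := k.+1)); lia.
have iter_p : iter p g (Tstar m k + q * k + s + p * k) = Tstar m k + q * k + s.
  by rewrite iter_g_block; lia.
rewrite m_eq iterD iterS iter_q g_exit iter_p.
by apply: h_eq; lia.
Qed.

Lemma h_succ n : 1 <= n -> h n.+1 = (h (iter m g n)).+1.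
Proof.
move=> n_pos; have := h_block (isT : 0 < n.+1).
case: (h n.+1) => [|k] n_in; last by rewrite (h_iter_g n_in).
by move: n_in; rewrite TstarS Tstar0; lia.
Qed.

Lemma nested_solution_block : nested_solution m g.
Proof.
split; first by rewrite /= h1.
split=> [n /g_bounded | n n_pos]; first lia.
have g_bounded_n x : 1 <= x <= n -> 1 <= g x <= x.
  by case/andP=> x_pos _; apply: g_bounded.
have /andP[b_pos b_le] := iter_bounded g_bounded_n n_pos m.
have := g_bounded b_pos; have := g_bounded (isT : 0 < n.+1).
by rewrite iterS /= h_succ //; lia.
Qed.

End BlockSequence.

Theorem mainTheorem1 (m : nat) (hm : 1 <= m) (h : nat -> nat)
  (hh : forall n k, 1 <= n -> (h n = k <-> Tstar m k <= n < Tstar m k.+1)) :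
  nested_solution m (fun n => n - h n) /\
  (forall a : nat -> nat, nested_solution m a ->
     forall n, 1 <= n -> a n = n - h n).
Proof.
have g_sol := nested_solution_block hh.
split=> // a a_sol n n_pos.
exact: nested_solution_unique a_sol g_sol n n_pos.
Qed.
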